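(* Let $\alpha\ge\omega$ be a countable ordinal with Cantor normal form $\alpha=\omega^{\beta_1}\cdot c_1+\omega^{\beta_2}\cdot c_2+\dots+\omega^{\beta_l}\cdot c_l$, where $\beta_1>\beta_2>\dots>\beta_l\ge0$ and $1\le c_i<\omega$. Then, regarding $\alpha$ as a linear order, $\mathsf{rk}(\alpha)=\omega\cdot\beta_1+\lfloor\log_2 c_1\rfloor$. In particular, the rank depends only on the leading term of the Cantor normal form.
   Context: An ordinal is regarded as the linear order $(\alpha,\in)$. Let $\mathcal F$ be the class of finite linear orders (language $\{<\}$); countable linear orders are the structures considered; substructures are suborders and $\mathsf{age}(X)$ is the set of finite suborders of $X$. For $A\le B$, $B$ is a prime extension of $A$ if $|B\setminus A|=1$; a realization of $B$ in $X$ (where $A\le X$) is $C\le X$ with $A\le C$ and an order-isomorphism $B\to C$ fixing $A$ pointwise. For $F\in\mathsf{age}(X)$ define by recursion: $\mathsf{rk}_X(F)\ge0$ always; $\mathsf{rk}_X(F)\ge\gamma+1$ iff every prime extension $B\in\mathcal F$ of $F$ has a realization $C$ in $X$ with $\mathsf{rk}_X(C)\ge\gamma$; for limit $\gamma$, $\mathsf{rk}_X(F)\ge\gamma$ iff $\mathsf{rk}_X(F)\ge\delta$ for all $\delta<\gamma$. $\mathsf{rk}_X(F)=\sup\{\gamma:\mathsf{rk}_X(F)\ge\gamma\}$ (or $\infty$ if this holds for all ordinals), and $\mathsf{rk}(X)=\mathsf{rk}_X(\emptyset)$. *)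

From Stdlib Require Import List Arith Sorted.
Import ListNotations.

Inductive Ord : Type :=
| OZ : Ord
| OS : Ord -> Ord
| OL : (nat -> Ord) -> Ord.

(** The (semantic) order: sound and complete for the interpretation
    OZ = 0, OS a = a+1, OL f = sup_n f n. *)
Inductive ole : Ord -> Ord -> Prop :=
| ole_zero x : ole OZ x
| ole_trans x y z : ole x y -> ole y z -> ole x z
| ole_succ x y : ole x y -> ole (OS x) (OS y)
| ole_cocone x f k : ole x (f k) -> ole x (OL f)
| ole_limiting f x : (forall k, ole (f k) x) -> ole (OL f) x.

Definition olt (a b : Ord) : Prop := ole (OS a) b.
Definition oeq (a b : Ord) : Prop := ole a b /\ ole b a.

Fixpoint ofin (n : nat) : Ord :=
  match n with 0 => OZ | Datatypes.S m => OS (ofin m) end.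

Definition omega : Ord := OL ofin.

Fixpoint oadd (a b : Ord) : Ord :=
  match b with
  | OZ => a
  | OS b' => OS (oadd a b')
  | OL f => OL (fun n => oadd a (f n))
  end.

Fixpoint omul (a b : Ord) : Ord :=
  match b with
  | OZ => OZ
  | OS b' => oadd (omul a b') a
  | OL f => OL (fun n => omul a (f n))
  end.

Fixpoint oexpw (b : Ord) : Ord :=
  match b with
  | OZ => OS OZ
  | OS b' => omul (oexpw b') omega
  | OL f => OL (fun n => oexpw (f n))
  end.

Fixpoint cnf_eval (l : list (Ord * nat)) : Ord :=
  match l with
  | [] => OZ
  | (b, c) :: r => oadd (omul (oexpw b) (ofin c)) (cnf_eval r)
  end.

Definition below (alpha : Ord) : Type := { g : Ord | olt g alpha }.
Definition lt_below (alpha : Ord) (x y : below alpha) : Prop :=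
  olt (proj1_sig x) (proj1_sig y).

Definition inD {T : Type} (F : list T) (u : option T) : Prop :=
  match u with None => True | Some a => In a F end.

(** [R] describes a prime extension B of the finite suborder F:
    carrier = F plus one new point [None]; B is a linear order
    extending the order of F, with the new point distinct from F. *)
Definition is_prime_ext {T : Type} (lt : T -> T -> Prop) (F : list T)
    (R : option T -> option T -> Prop) : Prop :=
  (forall a b, In a F -> In b F -> (R (Some a) (Some b) <-> lt a b)) /\
  ~ R None None /\
  (forall a, In a F -> R None (Some a) \/ R (Some a) None) /\
  (forall u v w, inD F u -> inD F v -> inD F w -> R u v -> R v w -> R u w).

(** x realizes B over F: the map Some a |-> a, None |-> x is an
    order-isomorphism from B onto C = F + {x} fixing F. *)
Definition realizes {T : Type} (lt : T -> T -> Prop) (F : list T)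
    (R : option T -> option T -> Prop) (x : T) : Prop :=
  forall a, In a F -> (lt a x <-> R (Some a) None) /\ (lt x a <-> R None (Some a)).

(** rkge lt g F  <->  rk_X(F) >= g *)
Fixpoint rkge {T : Type} (lt : T -> T -> Prop) (g : Ord) (F : list T) : Prop :=
  match g with
  | OZ => True
  | OS d => forall R, is_prime_ext lt F R ->
              exists x, realizes lt F R x /\ rkge lt d (x :: F)
  | OL f => forall n, rkge lt (f n) F
  end.

Definition rank_is {T : Type} (lt : T -> T -> Prop) (rho : Ord) : Prop :=
  rkge lt rho [] /\ (forall g, rkge lt g [] -> ole g rho).

From Stdlib Require Import List Arith Sorted Lia.
From Stdlib Require Import Classical ClassicalEpsilon FunctionalExtensionality.
Import ListNotations.

(* Call a set S of points of a linear order (g+1)-splittable when some x in S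
   leaves g-splittable sets on both sides of it (and l-splittable, for a limit l,
   when it is g-splittable for all g < l).  A prime extension of a finite F is a gap
   of F, and rk(F) >= g iff the realizations of every gap of F form a g-splittable
   set; so rk(X) is the supremum of the g for which X is g-splittable.
   In an ordinal, splitting a segment of length d + 1 + d at its middle point shows
   that segments of length omega^b * 2^k are (omega * b + k)-splittable, and
   omega^(b+1) is the supremum of the omega^b * 2^k.  Conversely, if
   omega^b * c <= v < omega^b * (c + 1) and [0, v) is split at a point of the m-th
   block of length omega^b, the two sides consist of at most m and c - m blocks (or
   lie within one block, where splittability stays below omega * b), and
   1 + min(log2 m, log2 (c - m)) <= log2 c; induction on b and on the splitting depth
   then gives the upper bound omega * b + log2 c.  The lower terms of the Cantor
   normal form only move alpha inside the c1-th block of length omega^beta1. *)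

(* [ole] by recursion on the left argument; its inversion principles are
   definitional, which [ole] (closed under transitivity) lacks. *)
Fixpoint sle (a b : Ord) {struct a} : Prop :=
  match a with
  | OZ => True
  | OS a' => (fix slt_a (b : Ord) : Prop :=
               match b with OZ => False | OS b' => sle a' b' | OL g => exists n, slt_a (g n) end) b
  | OL f => forall n, sle (f n) b
  end.

Lemma sle_cocone x g k : sle x (g k) -> sle x (OL g).
Proof.
  revert g k; induction x as [|x IH|f IH]; intros g k H; simpl in *.
  - exact I.
  - exists k. exact H.
  - intro n. exact (IH n g k (H n)).
Qed.

Lemma sle_refl x : sle x x.
Proof.
  induction x as [|x IH|f IH]; simpl.
  - exact I.
  - exact IH.
  - intro n. exact (sle_cocone _ f n (IH n)).
Qed.

Lemma sle_trans a : forall b c, sle a b -> sle b c -> sle a c.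
Proof.
  induction a as [|a IH|f IH]; intros b c Hab Hbc.
  - exact I.
  - revert c Hbc. induction b as [|b _|g IHg]; intros c Hbc; simpl in Hab.
    + contradiction.
    + induction c as [|c _|h IHh]; simpl in *.
      * contradiction.
      * exact (IH b c Hab Hbc).
      * destruct Hbc as [n Hn]. exists n. exact (IHh n Hn).
    + destruct Hab as [n Hn]. exact (IHg n Hn c (Hbc n)).
  - intro n. exact (IH n b c (Hab n) Hbc).
Qed.

Lemma ole_iff_sle a b : ole a b <-> sle a b.
Proof.
  split.
  - induction 1.
    + exact I.
    + eapply sle_trans; eauto.
    + exact IHole.
    + eapply sle_cocone; eauto.
    + exact H0.
  - revert b; induction a as [|a IH|f IH]; intros b H.
    + constructor.
    + induction b as [|b _|g IHg]; simpl in H.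
      * contradiction.
      * apply ole_succ, IH, H.
      * destruct H as [n Hn]. apply ole_cocone with n. exact (IHg n Hn).
    + apply ole_limiting. intro n. exact (IH n b (H n)).
Qed.

Lemma ole_refl x : ole x x.
Proof. apply ole_iff_sle, sle_refl. Qed.

Lemma olt_OZ v : ~ olt v OZ.
Proof. unfold olt. rewrite ole_iff_sle. simpl. tauto. Qed.

Lemma olt_OS_inv v b : olt v (OS b) -> ole v b.
Proof. unfold olt. rewrite !ole_iff_sle. exact (fun H => H). Qed.

Lemma olt_OL_inv v g : olt v (OL g) -> exists n, olt v (g n).
Proof.
  unfold olt. rewrite ole_iff_sle. intros [n Hn]. exists n. apply ole_iff_sle. exact Hn.
Qed.

Lemma olt_OS x : olt x (OS x).
Proof. apply ole_refl. Qed.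

Lemma ole_S x : ole x (OS x).
Proof.
  induction x as [|x IH|f IH].
  - constructor.
  - apply ole_succ, IH.
  - apply ole_limiting. intro n. eapply ole_trans; [apply IH|].
    apply ole_succ. apply ole_cocone with n. apply ole_refl.
Qed.

Lemma olt_ole a b : olt a b -> ole a b.
Proof. intro H. eapply ole_trans; [apply ole_S|exact H]. Qed.

Lemma olt_ole_trans a b c : olt a b -> ole b c -> olt a c.
Proof. apply ole_trans. Qed.

Lemma ole_olt_trans a b c : ole a b -> olt b c -> olt a c.
Proof. intros Hab Hbc. eapply ole_trans; [apply ole_succ, Hab|exact Hbc]. Qed.

Lemma olt_trans a b c : olt a b -> olt b c -> olt a c.
Proof. intros Hab Hbc. eapply olt_ole_trans; [exact Hab|apply olt_ole, Hbc]. Qed.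

Lemma olt_irrefl a : ~ olt a a.
Proof.
  induction a as [|a IH|f IH]; intro H.
  - exact (olt_OZ _ H).
  - exact (IH (olt_OS_inv _ _ H)).
  - destruct (olt_OL_inv _ _ H) as [n Hn]. apply (IH n).
    eapply ole_olt_trans; [|exact Hn]. apply ole_cocone with n, ole_refl.
Qed.

Lemma ole_olt_false a b : ole a b -> olt b a -> False.
Proof. intros Hab Hba. exact (olt_irrefl a (ole_olt_trans _ _ _ Hab Hba)). Qed.

Lemma olt_wf : well_founded olt.
Proof.
  enough (H : forall b a, ole a b -> Acc olt a) by (intro a; exact (H a a (ole_refl a))).
  induction b as [|b IH|g IH]; intros a Ha; constructor; intros c Hc;
    pose proof (olt_ole_trans _ _ _ Hc Ha) as Hcb.
  - destruct (olt_OZ _ Hcb).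
  - exact (IH c (olt_OS_inv _ _ Hcb)).
  - destruct (olt_OL_inv _ _ Hcb) as [n Hn]. exact (IH n c (olt_ole _ _ Hn)).
Qed.

Lemma ole_or_olt a b : ole a b \/ olt b a.
Proof.
  rewrite ole_iff_sle. unfold olt. rewrite ole_iff_sle. revert b.
  induction a as [|a IH|f IH]; intro b.
  - left; exact I.
  - induction b as [|b _|g IHg]; simpl.
    + right. exact I.
    + exact (IH b).
    + destruct (classic (exists n, sle (OS a) (g n))) as [Hn|Hn].
      * left. exact Hn.
      * right. intro n. destruct (IHg n) as [H|H]; [exfalso; eauto|exact H].
  - destruct (classic (forall n, sle (f n) b)) as [H|H].
    + left. exact H.
    + right. apply not_all_ex_not in H. destruct H as [n Hn].
      destruct (IH n b) as [H|H]; [contradiction|]. exact (sle_cocone _ f n H).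
Qed.

Lemma ole_add_r a x : ole a (oadd a x).
Proof.
  induction x as [|x IH|f IH]; simpl.
  - apply ole_refl.
  - eapply ole_trans; [exact IH|apply ole_S].
  - apply ole_cocone with 0. apply IH.
Qed.

Lemma oadd_le_mono_l a b b' : ole b b' -> ole (oadd a b) (oadd a b').
Proof.
  induction 1; simpl.
  - apply ole_add_r.
  - eapply ole_trans; eauto.
  - apply ole_succ. assumption.
  - apply ole_cocone with k. assumption.
  - apply ole_limiting. assumption.
Qed.

Lemma oadd_le_mono_r a a' b : ole a a' -> ole (oadd a b) (oadd a' b).
Proof.
  intro H. induction b as [|b IH|f IH]; simpl.
  - exact H.
  - apply ole_succ, IH.
  - apply ole_limiting. intro n. apply ole_cocone with n, IH.
Qed.

Lemma oadd_le_mono a a' b b' : ole a a' -> ole b b' -> ole (oadd a b) (oadd a' b').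
Proof.
  intros. eapply ole_trans; [apply oadd_le_mono_r|apply oadd_le_mono_l]; eassumption.
Qed.

Lemma oadd_lt_mono_l a b b' : olt b b' -> olt (oadd a b) (oadd a b').
Proof. exact (oadd_le_mono_l a (OS b) b'). Qed.

Lemma oadd_lt_cancel_l a b b' : olt (oadd a b) (oadd a b') -> olt b b'.
Proof.
  intro H. destruct (ole_or_olt b' b) as [Hle|Hlt]; [|exact Hlt].
  destruct (ole_olt_false _ _ (oadd_le_mono_l a _ _ Hle) H).
Qed.

Lemma oadd_assoc a b c : oadd (oadd a b) c = oadd a (oadd b c).
Proof.
  induction c as [|c IH|f IH]; simpl.
  - reflexivity.
  - rewrite IH. reflexivity.
  - f_equal. apply functional_extensionality. exact IH.
Qed.

Lemma oadd_0_l x : oadd OZ x = x.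
Proof.
  induction x as [|x IH|f IH]; simpl.
  - reflexivity.
  - rewrite IH. reflexivity.
  - f_equal. apply functional_extensionality. exact IH.
Qed.

Lemma ole_exists_add a z : ole a z -> exists y, oeq z (oadd a y).
Proof.
  revert a. induction z as [|z IH|g IH]; intros a H.
  - exists OZ. split; [constructor|exact H].
  - destruct (ole_or_olt a z) as [Haz|Hza].
    + destruct (IH a Haz) as [y [Hy1 Hy2]]. exists (OS y). split; apply ole_succ; assumption.
    + exists OZ. split; [exact Hza|exact H].
  - assert (Hc : forall n, exists y,
               ole (oadd a y) (OL g) /\ (ole a (g n) -> oeq (g n) (oadd a y))).
    { intro n. destruct (classic (ole a (g n))) as [Hn|Hn].
      - destruct (IH n a Hn) as [y Hy]. exists y. split; [|intros _; exact Hy].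
        apply ole_cocone with n, Hy.
      - exists OZ. split; [exact H|intro; contradiction]. }
    destruct (choice _ Hc) as [y Hy].
    exists (OL y). split; apply ole_limiting; intro n; [apply ole_cocone with n|apply Hy].
    destruct (ole_or_olt a (g n)) as [Hn|Hn].
    + apply (Hy n), Hn.
    + eapply ole_trans; [apply olt_ole, Hn|apply ole_add_r].
Qed.

Lemma ofin_add a b : oadd (ofin a) (ofin b) = ofin (a + b).
Proof.
  induction b as [|b IH]; simpl.
  - rewrite Nat.add_0_r. reflexivity.
  - rewrite Nat.add_succ_r, IH. reflexivity.
Qed.

Lemma ofin_le_mono a b : a <= b -> ole (ofin a) (ofin b).
Proof.
  induction 1.
  - apply ole_refl.
  - eapply ole_trans; [exact IHle|apply ole_S].
Qed.

Lemma ofin_lt_omega n : olt (ofin n) omega.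
Proof. apply ole_cocone with (S n), ole_refl. Qed.

Lemma olt_ofin_inv x n : olt x (ofin n) -> exists i, i < n /\ oeq x (ofin i).
Proof.
  induction n as [|n IH]; intro H.
  - destruct (olt_OZ _ H).
  - destruct (ole_or_olt (ofin n) x) as [Hnx|Hxn].
    + exists n. split; [lia|split; [apply olt_OS_inv, H|exact Hnx]].
    + destruct (IH Hxn) as [i [Hi Hx]]. exists i. split; [lia|exact Hx].
Qed.

Lemma omul_le_mono_l a b b' : ole b b' -> ole (omul a b) (omul a b').
Proof.
  induction 1; simpl.
  - constructor.
  - eapply ole_trans; eauto.
  - apply oadd_le_mono_r. assumption.
  - apply ole_cocone with k. assumption.
  - apply ole_limiting. assumption.
Qed.

Lemma omul_le_mono_r a a' b : ole a a' -> ole (omul a b) (omul a' b).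
Proof.
  intro H. induction b as [|b IH|f IH]; simpl.
  - constructor.
  - apply oadd_le_mono; assumption.
  - apply ole_limiting. intro n. apply ole_cocone with n, IH.
Qed.

Lemma omul_ofin_add a p q : omul a (ofin (p + q)) = oadd (omul a (ofin p)) (omul a (ofin q)).
Proof.
  induction q as [|q IH]; simpl.
  - rewrite Nat.add_0_r. reflexivity.
  - rewrite Nat.add_succ_r. simpl. rewrite IH. apply oadd_assoc.
Qed.

Lemma omul_ofin_1 a : omul a (ofin 1) = a.
Proof. apply oadd_0_l. Qed.

Lemma omul_1_ofin k : omul (ofin 1) (ofin k) = ofin k.
Proof. induction k as [|k IH]; simpl; [reflexivity|]. f_equal. exact IH. Qed.

Lemma ofin_le_omul a m : olt OZ a -> ole (ofin m) (omul a (ofin m)).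
Proof.
  intro Ha. induction m as [|m IH]; simpl.
  - constructor.
  - eapply ole_trans; [apply ole_succ, IH|]. exact (oadd_le_mono_l _ (ofin 1) a Ha).
Qed.

Lemma omega_le_omul b : olt OZ b -> ole omega (omul omega b).
Proof. intro Hb. rewrite <- (omul_ofin_1 omega) at 1. apply omul_le_mono_l, Hb. Qed.

Lemma oexpw_pos x : olt OZ (oexpw x).
Proof.
  induction x as [|x IH|f IH]; simpl.
  - apply ole_refl.
  - apply ole_cocone with 1. rewrite omul_ofin_1. exact IH.
  - apply ole_cocone with 0. apply IH.
Qed.

Lemma oexpw_le_mono b b' : ole b b' -> ole (oexpw b) (oexpw b').
Proof.
  induction 1; simpl.
  - apply oexpw_pos.
  - eapply ole_trans; eauto.
  - apply (omul_le_mono_r _ _ omega). assumption.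
  - apply ole_cocone with k. assumption.
  - apply ole_limiting. assumption.
Qed.

Lemma omul_oexpw_le_ofin b n : ole b OZ -> ole (omul (oexpw b) (ofin n)) (ofin n).
Proof.
  intro Hb. rewrite <- (omul_1_ofin n) at 2. apply omul_le_mono_r, (oexpw_le_mono _ OZ), Hb.
Qed.

Lemma oadd_1_oexpw b : olt OZ b -> ole (oadd (ofin 1) (oexpw b)) (oexpw b).
Proof.
  induction b as [|b _|f IH]; intro Hb.
  - destruct (olt_OZ _ Hb).
  - simpl. apply ole_limiting. intro n. apply ole_cocone with (S n).
    change (S n) with (1 + n). rewrite omul_ofin_add, omul_ofin_1.
    apply oadd_le_mono_r, oexpw_pos.
  - (* some [f k] is positive, so [oexpw (f k)] absorbs [1] and hence is at least [2] *)
    destruct (olt_OL_inv _ _ Hb) as [k Hk].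
    assert (H2 : ole (ofin 2) (oexpw (f k))).
    { eapply ole_trans; [|exact (IH k Hk)]. apply (oadd_le_mono_l _ (ofin 1)), oexpw_pos. }
    simpl. apply ole_limiting. intro n. destruct (ole_or_olt (ofin 1) (f n)) as [Hn|Hn].
    + apply ole_cocone with n, IH, Hn.
    + apply ole_cocone with k. eapply ole_trans; [|exact H2].
      apply (oadd_le_mono_l _ _ (ofin 1)), (oexpw_le_mono _ OZ), olt_OS_inv, Hn.
Qed.

Lemma oadd_1_omul_oexpw b m : olt OZ b ->
  ole (oadd (ofin 1) (omul (oexpw b) (ofin (S m)))) (omul (oexpw b) (ofin (S m))).
Proof.
  intro Hb. change (S m) with (1 + m). rewrite omul_ofin_add, omul_ofin_1, <- oadd_assoc.
  apply oadd_le_mono_r, oadd_1_oexpw, Hb.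
Qed.

Lemma oadd_lt_oexpw b : forall x y, olt x (oexpw b) -> olt y (oexpw b) -> olt (oadd x y) (oexpw b).
Proof.
  induction b as [|b _|f IH]; intros x y Hx Hy; simpl in *.
  - apply ole_succ. eapply ole_trans; [apply oadd_le_mono_l, olt_OS_inv, Hy|apply olt_OS_inv, Hx].
  - destruct (olt_OL_inv _ _ Hx) as [n1 H1], (olt_OL_inv _ _ Hy) as [n2 H2].
    apply ole_cocone with (n1 + n2). rewrite omul_ofin_add.
    eapply ole_olt_trans; [apply oadd_le_mono_r, olt_ole, H1|apply oadd_lt_mono_l, H2].
  - destruct (olt_OL_inv _ _ Hx) as [n1 H1], (olt_OL_inv _ _ Hy) as [n2 H2].
    destruct (ole_or_olt (f n1) (f n2)) as [E|E].
    + apply ole_cocone with n2. apply IH; [|exact H2].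
      eapply olt_ole_trans; [exact H1|apply oexpw_le_mono, E].
    + apply ole_cocone with n1. apply IH; [exact H1|].
      eapply olt_ole_trans; [exact H2|apply oexpw_le_mono, olt_ole, E].
Qed.

Lemma omul_oexpw_lt b b' c : olt b b' -> olt (omul (oexpw b) (ofin c)) (oexpw b').
Proof.
  intro H. eapply olt_ole_trans; [|apply (oexpw_le_mono _ _ H)]. simpl.
  apply ole_cocone with (S c). apply (oadd_lt_mono_l _ OZ), oexpw_pos.
Qed.

Lemma cnf_eval_lt B l :
  Forall (fun p : Ord * nat => olt (fst p) B) l -> olt (cnf_eval l) (oexpw B).
Proof.
  induction 1 as [|[b c] l Hb _ IH]; simpl.
  - apply oexpw_pos.
  - apply oadd_lt_oexpw; [apply omul_oexpw_lt, Hb|exact IH].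
Qed.

(** * Splittable sets *)

Fixpoint splitge {T : Type} (lt : T -> T -> Prop) (g : Ord) (S : T -> Prop) : Prop :=
  match g with
  | OZ => True
  | OS d => exists x, S x /\ splitge lt d (fun z => S z /\ lt z x)
                          /\ splitge lt d (fun z => S z /\ lt x z)
  | OL f => forall n, splitge lt (f n) S
  end.

Lemma splitge_transfer {T1 T2 : Type} (lt1 : T1 -> T1 -> Prop) (lt2 : T2 -> T2 -> Prop)
    (corr : T1 -> T2 -> Prop) g : forall (S1 : T1 -> Prop) (S2 : T2 -> Prop),
  (forall z, S1 z -> exists w, S2 w /\ corr z w) ->
  (forall z1 z2 w1 w2, S1 z1 -> S1 z2 -> corr z1 w1 -> corr z2 w2 -> lt1 z1 z2 -> lt2 w1 w2) ->
  splitge lt1 g S1 -> splitge lt2 g S2.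
Proof.
  induction g as [|d IH|f IH]; simpl; intros S1 S2 Hcorr Hmono H.
  - exact I.
  - destruct H as [x [Hx [HL HR]]]. destruct (Hcorr x Hx) as [w [Hw Hxw]].
    exists w. split; [exact Hw|split].
    + refine (IH _ _ _ _ HL); [|intros z1 z2 w1 w2 [H1 _] [H2 _]; apply Hmono; assumption].
      intros z [Hz Hzx]. destruct (Hcorr z Hz) as [w' [Hw' Hzw']].
      exists w'. split; [split; [exact Hw'|exact (Hmono z x w' w Hz Hx Hzw' Hxw Hzx)]|exact Hzw'].
    + refine (IH _ _ _ _ HR); [|intros z1 z2 w1 w2 [H1 _] [H2 _]; apply Hmono; assumption].
      intros z [Hz Hxz]. destruct (Hcorr z Hz) as [w' [Hw' Hzw']].
      exists w'. split; [split; [exact Hw'|exact (Hmono x z w w' Hx Hz Hxw Hzw' Hxz)]|exact Hzw'].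
  - intro n. exact (IH n S1 S2 Hcorr Hmono (H n)).
Qed.

Lemma splitge_sub {T : Type} (lt : T -> T -> Prop) g (S1 S2 : T -> Prop) :
  (forall z, S1 z -> S2 z) -> splitge lt g S1 -> splitge lt g S2.
Proof.
  intro Hsub. apply (splitge_transfer lt lt eq).
  - intros z Hz. exists z. split; [exact (Hsub z Hz)|reflexivity].
  - intros z1 z2 w1 w2 _ _ <- <-. exact (fun H => H).
Qed.

Lemma splitge_le {T : Type} (lt : T -> T -> Prop) g g' :
  ole g g' -> forall S, splitge lt g' S -> splitge lt g S.
Proof.
  induction 1; intros S H'; simpl in *.
  - exact I.
  - auto.
  - destruct H' as [z [Hz [HL HR]]]. exists z. auto.
  - apply IHole, H'.
  - intro k. apply H0, H'.
Qed.

(** * Rank of a linear order through its gaps *)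

(* The gap of [x :: F] immediately to the left of [x], inside a gap of [F] realized by [x]. *)
Definition ext_left {T : Type} (lt : T -> T -> Prop) (x : T) (u v : option T) : Prop :=
  match u, v with
  | Some a, Some b => lt a b
  | None, Some a => a = x \/ lt x a
  | Some a, None => lt a x
  | None, None => False
  end.

Definition ext_right {T : Type} (lt : T -> T -> Prop) (x : T) (u v : option T) : Prop :=
  ext_left (fun a b => lt b a) x v u.

Lemma is_prime_ext_dual {T : Type} (lt : T -> T -> Prop) F R :
  is_prime_ext lt F R -> is_prime_ext (fun a b => lt b a) F (fun u v => R v u).
Proof.
  intros [Hord [Hnn [Hcmp Htr]]]. split; [|split; [exact Hnn|split]].
  - intros a b Ha Hb. exact (Hord b a Hb Ha).
  - intros a Ha. destruct (Hcmp a Ha); tauto.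
  - intros u v w Hu Hv Hw Huv Hvw. exact (Htr w v u Hw Hv Hu Hvw Huv).
Qed.

Lemma realizes_dual {T : Type} (lt : T -> T -> Prop) F R x :
  realizes lt F R x -> realizes (fun a b => lt b a) F (fun u v => R v u) x.
Proof. intros Hx a Ha. destruct (Hx a Ha). split; assumption. Qed.

Lemma is_prime_ext_tail {T : Type} (lt : T -> T -> Prop) x F R :
  is_prime_ext lt (x :: F) R -> is_prime_ext lt F R.
Proof.
  intros [Hord [Hnn [Hcmp Htr]]]. split; [|split; [exact Hnn|split]].
  - intros a b Ha Hb. apply Hord; right; assumption.
  - intros a Ha. apply Hcmp. right; exact Ha.
  - intros [u|] [v|] [w|] Hu Hv Hw; apply Htr; simpl in *; auto.
Qed.

Lemma realizes_same_gap {T : Type} (lt : T -> T -> Prop) F R R0 x z :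
  realizes lt F R x -> realizes lt F R0 x -> realizes lt F R z -> realizes lt F R0 z.
Proof.
  intros H1 H2 H3 a Ha. specialize (H1 a Ha). specialize (H2 a Ha). specialize (H3 a Ha). tauto.
Qed.

Section Gaps.

Variables (T : Type) (lt : T -> T -> Prop).
Hypothesis lt_irrefl : forall a, ~ lt a a.
Hypothesis lt_trans : forall a b c, lt a b -> lt b c -> lt a c.

Lemma realizes_cmp F R x a :
  is_prime_ext lt F R -> realizes lt F R x -> In a F -> lt a x \/ lt x a.
Proof.
  intros [_ [_ [Hcmp _]]] Hx Ha. destruct (Hx a Ha) as [E1 E2].
  destruct (Hcmp a Ha); [right; apply E2|left; apply E1]; assumption.
Qed.

Lemma realizes_notin F R x a :
  is_prime_ext lt F R -> realizes lt F R x -> In a F -> a <> x.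
Proof.
  intros HR Hx Ha ->. destruct (realizes_cmp F R x x HR Hx Ha); eapply lt_irrefl; eauto.
Qed.

Lemma prime_ext_asym F R u v :
  is_prime_ext lt F R -> inD F u -> inD F v -> R u v -> R v u -> False.
Proof.
  intros [Hord [Hnn [_ Htr]]] Hu Hv Huv Hvu. pose proof (Htr u v u Hu Hv Hu Huv Hvu) as Huu.
  destruct u as [a|]; [exact (lt_irrefl a (proj1 (Hord a a Hu Hu) Huu))|exact (Hnn Huu)].
Qed.

Lemma is_prime_ext_left F R x :
  is_prime_ext lt F R -> realizes lt F R x -> is_prime_ext lt (x :: F) (ext_left lt x).
Proof.
  intros HR Hx. split; [|split; [|split]].
  - intros a b _ _. simpl. tauto.
  - simpl. tauto.
  - intros a [<-|Ha]; simpl; [left; left; reflexivity|].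
    destruct (realizes_cmp F R x a HR Hx Ha); [right|left; right]; assumption.
  - intros [u|] [v|] [w|] _ _ _; simpl; intros H1 H2; try contradiction.
    + eauto.
    + eauto.
    + destruct H2 as [<-|H2]; eauto.
    + right. destruct H1 as [<-|H1]; eauto.
    + destruct H1 as [<-|H1]; eapply lt_irrefl; eauto.
Qed.

Lemma realizes_left F R x z :
  is_prime_ext lt F R -> realizes lt F R x -> realizes lt (x :: F) (ext_left lt x) z ->
  realizes lt F R z /\ lt z x.
Proof.
  intros HR Hx Hz.
  assert (Hzx : lt z x) by (apply (Hz x (or_introl eq_refl)); left; reflexivity).
  split; [|exact Hzx]. intros a Ha.
  destruct (Hz a (or_intror Ha)) as [E1 E2], (Hx a Ha) as [F1 F2]. simpl in E1, E2. split.
  - rewrite E1. exact F1.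
  - rewrite E2, <- F2. pose proof (realizes_notin F R x a HR Hx Ha). tauto.
Qed.

Lemma realizes_cons_left F R' x z :
  is_prime_ext lt (x :: F) R' -> R' None (Some x) -> realizes lt F R' z -> lt z x ->
  realizes lt (x :: F) R' z.
Proof.
  intros HR' Hn Hz Hzx a [<-|Ha]; [|exact (Hz a Ha)].
  split; split; intro H.
  - destruct (lt_irrefl z); eauto.
  - destruct (prime_ext_asym _ _ None (Some x) HR' I (or_introl eq_refl) Hn H).
  - exact Hn.
  - exact Hzx.
Qed.

(* If [x] does not realize the restriction to [F] of a gap [R'] of [x :: F] lying
   left of [x], then some point of [F] between them separates that whole gap from [x]. *)
Lemma realizes_restrict_left F R R' x z :
  is_prime_ext lt F R -> realizes lt F R x -> is_prime_ext lt (x :: F) R' ->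
  R' None (Some x) -> ~ realizes lt F R' x -> realizes lt F R' z -> lt z x.
Proof.
  intros HR Hx HR' Hn Hd Hz.
  apply not_all_ex_not in Hd. destruct Hd as [a Hd].
  apply imply_to_and in Hd. destruct Hd as [Ha Hm].
  pose proof HR' as [Hord [_ [Hcmp Htr]]].
  assert (Hax : In a (x :: F)) by (right; exact Ha).
  assert (Hxx : In x (x :: F)) by (left; reflexivity).
  destruct (realizes_cmp F R x a HR Hx Ha) as [Hxa|Hxa], (Hcmp a Hax) as [D|D].
  - apply lt_trans with a; [apply (Hz a Ha), D|exact Hxa].
  - exfalso. apply Hm. split; split; intro H; try assumption.
    + destruct (lt_irrefl a); eauto.
    + destruct (prime_ext_asym _ _ None (Some a) HR' I Hax H D).
  - exfalso. apply Hm. split; split; intro H; try assumption.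
    + destruct (lt_irrefl a); eauto.
    + destruct (prime_ext_asym _ _ None (Some a) HR' I Hax D H).
  - exfalso. assert (E : R' (Some x) (Some a)) by (apply Hord; assumption).
    exact (prime_ext_asym _ _ None (Some x) HR' I Hxx Hn
             (Htr (Some x) (Some a) None Hxx Hax I E D)).
Qed.

End Gaps.

Section Rank.

Variables (T : Type) (lt : T -> T -> Prop).
Hypothesis lt_irrefl : forall a, ~ lt a a.
Hypothesis lt_trans : forall a b c, lt a b -> lt b c -> lt a c.

Let gt_irrefl : forall a, ~ (fun a b => lt b a) a a := lt_irrefl.
Let gt_trans : forall a b c, lt b a -> lt c b -> lt c a :=
  fun a b c Hab Hbc => lt_trans c b a Hbc Hab.

Lemma is_prime_ext_right F R x :
  is_prime_ext lt F R -> realizes lt F R x -> is_prime_ext lt (x :: F) (ext_right lt x).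
Proof.
  intros HR Hx. apply (is_prime_ext_dual (fun a b => lt b a)).
  apply (is_prime_ext_left _ _ gt_irrefl gt_trans F (fun u v => R v u));
    [apply is_prime_ext_dual, HR|apply realizes_dual, Hx].
Qed.

Lemma realizes_right F R x z :
  is_prime_ext lt F R -> realizes lt F R x -> realizes lt (x :: F) (ext_right lt x) z ->
  realizes lt F R z /\ lt x z.
Proof.
  intros HR Hx Hz.
  destruct (realizes_left _ _ gt_irrefl F (fun u v => R v u) x z) as [Hz' Hxz];
    [apply is_prime_ext_dual, HR|apply realizes_dual, Hx|apply (realizes_dual lt), Hz|].
  split; [apply (realizes_dual (fun a b => lt b a)), Hz'|exact Hxz].
Qed.

Lemma realizes_cons_right F R' x z :
  is_prime_ext lt (x :: F) R' -> R' (Some x) None -> realizes lt F R' z -> lt x z ->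
  realizes lt (x :: F) R' z.
Proof.
  intros HR' Hn Hz Hxz. apply (realizes_dual (fun a b => lt b a)).
  apply (realizes_cons_left _ _ gt_irrefl gt_trans F (fun u v => R' v u));
    [apply is_prime_ext_dual, HR'|exact Hn|apply realizes_dual, Hz|exact Hxz].
Qed.

Lemma realizes_restrict_right F R R' x z :
  is_prime_ext lt F R -> realizes lt F R x -> is_prime_ext lt (x :: F) R' ->
  R' (Some x) None -> ~ realizes lt F R' x -> realizes lt F R' z -> lt x z.
Proof.
  intros HR Hx HR' Hn Hd Hz.
  apply (realizes_restrict_left _ _ gt_irrefl gt_trans F
           (fun u v => R v u) (fun u v => R' v u) x z).
  - apply is_prime_ext_dual, HR.
  - apply realizes_dual, Hx.
  - apply is_prime_ext_dual, HR'.
  - exact Hn.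
  - intro H. apply Hd, (realizes_dual (fun a b => lt b a)), H.
  - apply realizes_dual, Hz.
Qed.

Lemma rkge_splitge g : forall F, rkge lt g F ->
  forall R, is_prime_ext lt F R -> splitge lt g (realizes lt F R).
Proof.
  induction g as [|d IH|f IH]; simpl; intros F H R HR.
  - exact I.
  - destruct (H R HR) as [x [Hx Hd]]. exists x. split; [exact Hx|split].
    + refine (splitge_sub lt d _ _ _
                (IH (x :: F) Hd _ (is_prime_ext_left _ _ lt_irrefl lt_trans F R x HR Hx))).
      intros z Hz. exact (realizes_left _ _ lt_irrefl F R x z HR Hx Hz).
    + refine (splitge_sub lt d _ _ _ (IH (x :: F) Hd _ (is_prime_ext_right F R x HR Hx))).
      intros z Hz. exact (realizes_right F R x z HR Hx Hz).
  - intro n. exact (IH n F (H n) R HR).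
Qed.

(* A gap [R'] of [x :: F] either lies next to [x] inside the gap of [F] split by [x],
   and then its realizations are one half of the split, or it is a whole gap of [F]. *)
Lemma splitge_rkge g : forall F,
  (forall R, is_prime_ext lt F R -> splitge lt g (realizes lt F R)) -> rkge lt g F.
Proof.
  induction g as [|d IH|f IH]; simpl; intros F H.
  - exact I.
  - intros R HR. destruct (H R HR) as [x [Hx [HL HRt]]]. exists x. split; [exact Hx|].
    apply IH. intros R' HR'. pose proof (is_prime_ext_tail lt x F R' HR') as HR0.
    assert (Hside : R' None (Some x) \/ R' (Some x) None) by (apply HR'; left; reflexivity).
    destruct (classic (realizes lt F R' x)) as [Hs|Hd].
    + destruct Hside as [Hside|Hside].
      * refine (splitge_sub lt d _ _ _ HL). intros z [Hz Hzx].
        exact (realizes_cons_left _ _ lt_irrefl lt_trans F R' x z HR' Hside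
                 (realizes_same_gap lt F R R' x z Hx Hs Hz) Hzx).
      * refine (splitge_sub lt d _ _ _ HRt). intros z [Hz Hxz].
        exact (realizes_cons_right F R' x z HR' Hside
                 (realizes_same_gap lt F R R' x z Hx Hs Hz) Hxz).
    + refine (splitge_sub lt d _ _ _ (splitge_le lt d (OS d) (ole_S d) _ (H R' HR0))).
      intros z Hz. destruct Hside as [Hside|Hside].
      * exact (realizes_cons_left _ _ lt_irrefl lt_trans F R' x z HR' Hside Hz
                 (realizes_restrict_left _ _ lt_irrefl lt_trans F R R' x z HR Hx HR' Hside Hd Hz)).
      * exact (realizes_cons_right F R' x z HR' Hside Hz
                 (realizes_restrict_right F R R' x z HR Hx HR' Hside Hd Hz)).
  - intro n. apply IH. intros R HR. exact (H R HR n).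
Qed.

Lemma rkge_nil_iff g : rkge lt g [] <-> splitge lt g (fun _ => True).
Proof.
  assert (Hreal : forall R z, realizes lt [] R z) by (intros R z a []).
  split; intro H.
  - refine (splitge_sub lt g _ _ (fun _ _ => I) (rkge_splitge g [] H (fun _ _ => False) _)).
    split; [intros a b []|split; [tauto|split; [intros a []|intros u v w _ _ _ []]]].
  - apply splitge_rkge. intros R _. exact (splitge_sub lt g _ _ (fun z _ => Hreal R z) H).
Qed.

End Rank.

(** * Splittable segments of ordinals *)

Definition segment (lo hi z : Ord) : Prop := ole lo z /\ olt z hi.

Lemma splitge_segment_widen g lo hi hi' :
  ole hi hi' -> splitge olt g (segment lo hi) -> splitge olt g (segment lo hi').
Proof.
  intro Hhi. apply splitge_sub. intros z [Hz1 Hz2]. exact (conj Hz1 (olt_ole_trans _ _ _ Hz2 Hhi)).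
Qed.

Lemma splitge_segment_double g d :
  (forall lo, splitge olt g (segment lo (oadd lo d))) ->
  forall lo, splitge olt (OS g) (segment lo (oadd lo (oadd (OS d) d))).
Proof.
  intros H lo. exists (oadd lo d). split; [split|split].
  - apply ole_add_r.
  - apply oadd_lt_mono_l. apply ole_add_r.
  - refine (splitge_sub olt g _ _ _ (H lo)). intros z [Hz1 Hz2].
    split; [split|]; [exact Hz1| |exact Hz2].
    eapply olt_ole_trans; [exact Hz2|]. apply oadd_le_mono_l.
    eapply ole_trans; [apply ole_S|apply ole_add_r].
  - refine (splitge_sub olt g _ _ _ (H (OS (oadd lo d)))). intros z [Hz1 Hz2].
    split; [split|exact Hz1].
    + eapply ole_trans; [|exact Hz1]. eapply ole_trans; [apply ole_add_r|apply ole_S].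
    + change (OS (oadd lo d)) with (oadd lo (OS d)) in Hz2. rewrite oadd_assoc in Hz2. exact Hz2.
Qed.

Lemma splitge_segment_doubling g (L : nat -> Ord) :
  (forall lo, splitge olt g (segment lo (oadd lo (L 0)))) ->
  (forall k, ole (oadd (OS (L k)) (L k)) (L (S k))) ->
  forall k lo, splitge olt (oadd g (ofin k)) (segment lo (oadd lo (L k))).
Proof.
  intros H0 Hstep k. induction k as [|k IH]; intro lo; [exact (H0 lo)|].
  refine (splitge_segment_widen _ _ _ _ _ (splitge_segment_double _ _ IH lo)).
  apply oadd_le_mono_l, Hstep.
Qed.

Lemma splitge_segment_ofin k lo : splitge olt (ofin k) (segment lo (oadd lo (ofin (2 ^ k - 1)))).
Proof.
  rewrite <- (oadd_0_l (ofin k)).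
  apply (splitge_segment_doubling OZ (fun k => ofin (2 ^ k - 1))); [intros; exact I|].
  intro j. change (OS (ofin (2 ^ j - 1))) with (ofin (S (2 ^ j - 1))). rewrite ofin_add.
  apply ofin_le_mono. pose proof (Nat.pow_nonzero 2 j). simpl. lia.
Qed.

Lemma omul_oexpw_pow2_double b k : olt OZ b ->
  ole (oadd (OS (omul (oexpw b) (ofin (2 ^ k)))) (omul (oexpw b) (ofin (2 ^ k))))
      (omul (oexpw b) (ofin (2 ^ S k))).
Proof.
  intro Hb. replace (2 ^ S k) with (2 ^ k + 2 ^ k) by (simpl; lia). rewrite omul_ofin_add.
  change (OS ?x) with (oadd x (ofin 1)). rewrite oadd_assoc. apply oadd_le_mono_l.
  assert (Hk : 2 ^ k <> 0) by (apply Nat.pow_nonzero; lia).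
  destruct (2 ^ k) as [|m]; [contradiction|]. apply oadd_1_omul_oexpw, Hb.
Qed.

Lemma splitge_segment_pow2 b : olt OZ b ->
  (forall lo, splitge olt (omul omega b) (segment lo (oadd lo (oexpw b)))) ->
  forall k lo, splitge olt (oadd (omul omega b) (ofin k))
                       (segment lo (oadd lo (omul (oexpw b) (ofin (2 ^ k))))).
Proof.
  intros Hb H. apply splitge_segment_doubling.
  - intro lo. rewrite <- (omul_ofin_1 (oexpw b)) in H. apply H.
  - intro k. apply omul_oexpw_pow2_double, Hb.
Qed.

Lemma splitge_segment_oexpw b :
  forall lo, splitge olt (omul omega b) (segment lo (oadd lo (oexpw b))).
Proof.
  induction b as [|b IH|f IH]; intros lo.
  - exact I.
  - intro n. destruct (ole_or_olt (ofin 1) b) as [Hb|Hb].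
    + refine (splitge_segment_widen _ _ _ _ _ (splitge_segment_pow2 b Hb IH n lo)).
      apply oadd_le_mono_l, ole_cocone with (2 ^ n), ole_refl.
    + (* [b] is zero, so [oexpw (OS b)] is just [omega] *)
      assert (Hb0 : ole b OZ) by exact (olt_OS_inv _ _ Hb).
      refine (splitge_le olt _ _ _ _ (splitge_segment_widen _ _ _ _ _ (splitge_segment_ofin n lo))).
      * rewrite <- (oadd_0_l (ofin n)) at 2. apply oadd_le_mono_r, (omul_le_mono_l omega _ OZ), Hb0.
      * apply oadd_le_mono_l, ole_cocone with (2 ^ n - 1), ofin_le_omul, oexpw_pos.
  - intro n. refine (splitge_segment_widen _ _ _ _ _ (IH n lo)).
    apply oadd_le_mono_l, ole_cocone with n, ole_refl.
Qed.

Lemma splitge_initial_segment b c alpha :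
  olt OZ b -> 1 <= c -> ole (omul (oexpw b) (ofin c)) alpha ->
  splitge olt (oadd (omul omega b) (ofin (Nat.log2 c))) (fun z => olt z alpha).
Proof.
  intros Hb Hc Halpha.
  refine (splitge_sub olt _ _ _ _ (splitge_segment_pow2 b Hb (splitge_segment_oexpw b) _ OZ)).
  intros z [_ Hz]. rewrite oadd_0_l in Hz. eapply olt_ole_trans; [exact Hz|].
  eapply ole_trans; [|exact Halpha]. apply omul_le_mono_l, ofin_le_mono, Nat.log2_spec. lia.
Qed.

(** * Upper bounds *)

Definition seg_rank_le (v bd : Ord) : Prop :=
  forall g, splitge olt g (fun z => olt z v) -> ole g bd.

Lemma splitge_shift a v g (S : Ord -> Prop) :
  (forall z, S z -> ole a z /\ olt z (oadd a v)) ->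
  splitge olt g S -> splitge olt g (fun y => olt y v).
Proof.
  intro HS. apply (splitge_transfer olt olt (fun z y => oeq z (oadd a y))).
  - intros z Hz. destruct (HS z Hz) as [Haz Hzv]. destruct (ole_exists_add a z Haz) as [y Hy].
    exists y. split; [|exact Hy]. apply (oadd_lt_cancel_l a).
    eapply ole_olt_trans; [apply Hy|exact Hzv].
  - intros z1 z2 y1 y2 _ _ Hy1 Hy2 Hz. apply (oadd_lt_cancel_l a).
    eapply ole_olt_trans; [apply Hy1|]. eapply olt_ole_trans; [exact Hz|apply Hy2].
Qed.

Lemma log2_add_min p q :
  1 <= p -> 1 <= q -> S (Nat.min (Nat.log2 p) (Nat.log2 q)) <= Nat.log2 (p + q).
Proof.
  intros Hp Hq. apply Nat.log2_le_pow2; [lia|].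
  pose proof (Nat.log2_spec p Hp). pose proof (Nat.log2_spec q Hq).
  set (k := Nat.min (Nat.log2 p) (Nat.log2 q)).
  assert (2 ^ k <= 2 ^ Nat.log2 p) by (apply Nat.pow_le_mono_r; lia).
  assert (2 ^ k <= 2 ^ Nat.log2 q) by (apply Nat.pow_le_mono_r; lia).
  rewrite Nat.pow_succ_r'. lia.
Qed.

Lemma ole_min_index (h : nat -> Ord) d p q : ole d (h p) -> ole d (h q) -> ole d (h (Nat.min p q)).
Proof. intros Hp Hq. destruct (Nat.min_spec p q) as [[_ ->]|[_ ->]]; assumption. Qed.

Lemma seg_rank_le_ofin n : seg_rank_le (ofin n) (ofin (Nat.log2 (n + 1))).
Proof.
  intro g. revert n. induction g as [|d IH|f IH]; intros n H.
  - constructor.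
  - destruct H as [x [Hx [HL HR]]]. destruct (olt_ofin_inv x n Hx) as [i [Hi [Exi Eix]]].
    assert (H1 : ole d (ofin (Nat.log2 (i + 1)))).
    { apply IH. refine (splitge_sub olt d _ _ _ HL). intros z [_ Hz]. eapply olt_ole_trans; eauto. }
    assert (H2 : ole d (ofin (Nat.log2 (n - S i + 1)))).
    { apply IH. refine (splitge_shift (OS x) _ d _ _ HR). intros z [Hzn Hxz]. split; [exact Hxz|].
      eapply olt_ole_trans; [exact Hzn|]. eapply ole_trans; [|apply oadd_le_mono_r, ole_succ, Eix].
      change (OS (ofin i)) with (ofin (S i)). rewrite ofin_add. apply ofin_le_mono. lia. }
    eapply ole_trans; [apply ole_succ, (ole_min_index ofin _ _ _ H1 H2)|].
    apply (ofin_le_mono (S _)).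
    replace (n + 1) with ((i + 1) + (n - S i + 1)) by lia. apply log2_add_min; lia.
  - apply ole_limiting. intro k. exact (IH k n (H k)).
Qed.

Lemma omul_ofin_block a x c : olt x (omul a (ofin (S c))) ->
  exists m, m <= c /\ ole (omul a (ofin m)) x /\ olt x (omul a (ofin (S m))).
Proof.
  induction c as [|c IH]; intro H.
  - exists 0. split; [lia|split; [constructor|exact H]].
  - destruct (ole_or_olt (omul a (ofin (S c))) x) as [H1|H1].
    + exists (S c). split; [lia|split; assumption].
    + destruct (IH H1) as [m [Hm Hm']]. exists m. split; [lia|exact Hm'].
Qed.

Lemma splitge_above_blocks X m c v x d : m <= c ->
  ole (omul X (ofin m)) x -> olt x v -> olt v (omul X (ofin (S c))) ->
  splitge olt d (fun z => olt z v /\ olt x z) ->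
  exists v', olt v' (omul X (ofin (S c - m))) /\ splitge olt d (fun y => olt y v').
Proof.
  intros Hmc Hmx Hxv Hv Hd.
  destruct (ole_exists_add (omul X (ofin m)) v) as [v' Ev].
  { exact (olt_ole _ _ (ole_olt_trans _ _ _ Hmx Hxv)). }
  exists v'. split.
  - apply (oadd_lt_cancel_l (omul X (ofin m))). rewrite <- omul_ofin_add.
    replace (m + (S c - m)) with (S c) by lia. eapply ole_olt_trans; [apply Ev|exact Hv].
  - refine (splitge_shift (omul X (ofin m)) v' d _ _ Hd). intros z [Hzv Hxz]. split.
    + eapply ole_trans; [exact Hmx|apply olt_ole, Hxz].
    + eapply olt_ole_trans; [exact Hzv|apply Ev].
Qed.

Section Blocks.

Variable b : Ord.
Hypothesis seg_rank_lt_omul : forall v, olt v (oexpw b) ->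
  exists bd, olt bd (omul omega b) /\ seg_rank_le v bd.

Lemma splitge_within_block_le w d k : olt w (oexpw b) -> splitge olt d (fun z => olt z w) ->
  ole (OS d) (oadd (omul omega b) (ofin k)).
Proof.
  intros Hw Hd. destruct (seg_rank_lt_omul w Hw) as [bd [Hbd Hw_bd]].
  eapply ole_trans; [|apply ole_add_r]. exact (ole_olt_trans _ _ _ (Hw_bd d Hd) Hbd).
Qed.

Lemma seg_rank_le_blocks c v : 1 <= c -> olt v (omul (oexpw b) (ofin (S c))) ->
  seg_rank_le v (oadd (omul omega b) (ofin (Nat.log2 c))).
Proof.
  intros Hc Hv g. revert c v Hc Hv. induction g as [|d IH|f IH]; intros c v Hc Hv H.
  - constructor.
  - destruct H as [x [Hxv [HL HR]]].
    destruct (omul_ofin_block _ x c (olt_trans _ _ _ Hxv Hv)) as [m [Hmc [Hmx Hxm]]].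
    assert (HL' : splitge olt d (fun z => olt z x)).
    { refine (splitge_sub olt d _ _ _ HL). intros z [_ Hzx]. exact Hzx. }
    destruct (splitge_above_blocks _ m c v x d Hmc Hmx Hxv Hv HR) as [v' [Hv' HR']].
    destruct (Nat.eq_dec m 0) as [->|Hm0].
    { apply (splitge_within_block_le x); [rewrite <- omul_ofin_1; exact Hxm|exact HL']. }
    destruct (Nat.eq_dec m c) as [->|Hmc'].
    { apply (splitge_within_block_le v'); [|exact HR'].
      replace (S c - c) with 1 in Hv' by lia. rewrite omul_ofin_1 in Hv'. exact Hv'. }
    assert (H1 : ole d (oadd (omul omega b) (ofin (Nat.log2 m)))).
    { apply (IH m x); [lia|exact Hxm|exact HL']. }
    assert (H2 : ole d (oadd (omul omega b) (ofin (Nat.log2 (c - m))))).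
    { apply (IH (c - m) v'); [lia| |exact HR'].
      replace (S (c - m)) with (S c - m) by lia. exact Hv'. }
    eapply ole_trans;
      [apply ole_succ, (ole_min_index (fun k => oadd (omul omega b) (ofin k)) _ _ _ H1 H2)|].
    apply (oadd_le_mono_l (omul omega b) (ofin (S _))), ofin_le_mono.
    replace c with (m + (c - m)) at 2 by lia. apply log2_add_min; lia.
  - apply ole_limiting. intro n. exact (IH n c v Hc Hv (H n)).
Qed.

End Blocks.

Lemma olt_oexpw_inv b v : olt v (oexpw b) ->
  (exists b' m, olt OZ b' /\ olt b' b /\ olt v (omul (oexpw b') (ofin m))) \/
  exists n, olt v (ofin n).
Proof.
  induction b as [|b _|f IH]; intro Hv.
  - right. exists 1. exact Hv.
  - destruct (olt_OL_inv _ _ Hv) as [n Hn]. destruct (ole_or_olt (ofin 1) b) as [Hb|Hb].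
    + left. exists b, n. split; [exact Hb|split; [apply olt_OS|exact Hn]].
    + right. exists n. eapply olt_ole_trans; [exact Hn|]. apply omul_oexpw_le_ofin, olt_OS_inv, Hb.
  - destruct (olt_OL_inv _ _ Hv) as [n Hn]. destruct (IH n Hn) as [[b' [m [Hb' [Hlt Hm]]]]|Hfin].
    + left. exists b', m. split; [exact Hb'|split; [apply ole_cocone with n, Hlt|exact Hm]].
    + right. exact Hfin.
Qed.

Lemma seg_rank_le_mono v v' bd : ole v v' -> seg_rank_le v' bd -> seg_rank_le v bd.
Proof.
  intros Hv H g Hg. apply H. refine (splitge_sub olt g _ _ _ Hg).
  intros z Hz. exact (olt_ole_trans _ _ _ Hz Hv).
Qed.

Lemma seg_rank_lt_oexpw b : olt OZ b ->
  (forall b', olt OZ b' -> olt b' b -> forall c v, 1 <= c -> olt v (omul (oexpw b') (ofin (S c))) ->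
     seg_rank_le v (oadd (omul omega b') (ofin (Nat.log2 c)))) ->
  forall v, olt v (oexpw b) -> exists bd, olt bd (omul omega b) /\ seg_rank_le v bd.
Proof.
  intros Hb IH v Hv. destruct (olt_oexpw_inv b v Hv) as [[b' [m [Hb' [Hlt Hm]]]]|[n Hn]].
  - exists (oadd (omul omega b') (ofin (Nat.log2 (S m)))). split.
    + eapply olt_ole_trans; [apply oadd_lt_mono_l, ofin_lt_omega|].
      exact (omul_le_mono_l omega (OS b') b Hlt).
    + apply (IH b' Hb' Hlt); [lia|]. eapply olt_ole_trans; [exact Hm|].
      apply omul_le_mono_l, ofin_le_mono. lia.
  - exists (ofin (Nat.log2 (n + 1))). split.
    + eapply olt_ole_trans; [apply ofin_lt_omega|apply omega_le_omul, Hb].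
    + apply (seg_rank_le_mono v (ofin n)); [apply olt_ole, Hn|apply seg_rank_le_ofin].
Qed.

Lemma seg_rank_le_omul_oexpw b : olt OZ b -> forall c v, 1 <= c ->
  olt v (omul (oexpw b) (ofin (S c))) -> seg_rank_le v (oadd (omul omega b) (ofin (Nat.log2 c))).
Proof.
  induction b as [b IH] using (well_founded_induction olt_wf). intro Hb.
  apply seg_rank_le_blocks, seg_rank_lt_oexpw; [exact Hb|].
  intros b' Hb' Hlt. exact (IH b' Hlt Hb').
Qed.

Lemma rkge_below_iff alpha g : rkge (lt_below alpha) g [] <-> splitge olt g (fun z => olt z alpha).
Proof.
  rewrite rkge_nil_iff; [|intro; apply olt_irrefl|intros ? ? ?; apply olt_trans].
  split; intro H.
  - refine (splitge_transfer _ olt (fun w z => proj1_sig w = z) g _ _ _ _ H).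
    + intros w _. exists (proj1_sig w). split; [exact (proj2_sig w)|reflexivity].
    + intros w1 w2 z1 z2 _ _ <- <-. exact (fun H => H).
  - refine (splitge_transfer olt _ (fun z w => proj1_sig w = z) g _ _ _ _ H).
    + intros z Hz. exists (exist _ z Hz). split; [exact I|reflexivity].
    + intros z1 z2 w1 w2 _ _ <- <-. exact (fun H => H).
Qed.

Lemma rank_is_between_blocks b c alpha : olt OZ b -> 1 <= c ->
  ole (omul (oexpw b) (ofin c)) alpha -> olt alpha (omul (oexpw b) (ofin (S c))) ->
  rank_is (lt_below alpha) (oadd (omul omega b) (ofin (Nat.log2 c))).
Proof.
  intros Hb Hc Hlow Hup. split.
  - apply rkge_below_iff, splitge_initial_segment; assumption.
  - intros g Hg. apply rkge_below_iff in Hg.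
    exact (seg_rank_le_omul_oexpw b Hb c alpha Hc Hup g Hg).
Qed.

Lemma cnf_eval_bounds b c rest :
  StronglySorted (fun p q : Ord * nat => olt (fst q) (fst p)) ((b, c) :: rest) ->
  ole (omul (oexpw b) (ofin c)) (cnf_eval ((b, c) :: rest)) /\
  olt (cnf_eval ((b, c) :: rest)) (omul (oexpw b) (ofin (S c))).
Proof.
  intro Hsort. split; [apply ole_add_r|].
  apply oadd_lt_mono_l, cnf_eval_lt. exact (proj2 (StronglySorted_inv Hsort)).
Qed.

Lemma olt_OZ_of_omega_le b c : ole omega (omul (oexpw b) (ofin c)) -> olt OZ b.
Proof.
  intro H. destruct (ole_or_olt (ofin 1) b) as [Hb|Hb]; [exact Hb|exfalso].
  apply (ole_olt_false _ _ H). eapply ole_olt_trans; [|apply (ofin_lt_omega c)].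
  apply omul_oexpw_le_ofin, olt_OS_inv, Hb.
Qed.

Theorem theorem6p13 (alpha beta1 : Ord) (c1 : nat) (rest : list (Ord * nat)) :
  ole omega alpha ->
  StronglySorted (fun p q : Ord * nat => olt (fst q) (fst p)) ((beta1, c1) :: rest) ->
  Forall (fun p : Ord * nat => 1 <= snd p) ((beta1, c1) :: rest) ->
  oeq alpha (cnf_eval ((beta1, c1) :: rest)) ->
  rank_is (lt_below alpha) (oadd (omul omega beta1) (ofin (Nat.log2 c1))).
Proof.
  intros Homega Hsort Hc [Hle Hge].
  destruct (cnf_eval_bounds beta1 c1 rest Hsort) as [Hlow Hup].
  assert (Hup' : olt alpha (omul (oexpw beta1) (ofin (S c1)))).
  { exact (ole_olt_trans _ _ _ Hle Hup). }
  apply rank_is_between_blocks.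
  - apply (olt_OZ_of_omega_le beta1 (S c1)), olt_ole. exact (ole_olt_trans _ _ _ Homega Hup').
  - exact (Forall_inv Hc).
  - exact (ole_trans _ _ _ Hlow Hge).
  - exact Hup'.
Qed.
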